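(* Let $S$ be a finite semigroup. The congruence $\equiv_{\mathsf{RM}}$ equals the intersection of the congruences $\equiv_{\mathsf{RM},J}$ as $J$ runs over the $\mathsf{RM}$-irreducible regular $\mathscr J$-classes of $S$. Moreover, no $\mathsf{RM}$-irreducible regular $\mathscr J$-class $J$ can be omitted from this intersection without changing the resulting congruence.
   Context: $\mathscr J$-classes are ordered by $J'\le J$ iff $S^1J'S^1\subseteq S^1JS^1$; regular means containing an idempotent. For a regular $\mathscr J$-class $J$: $s\equiv_{\mathsf{RM},J}t$ iff for all $x\in J$, $xs\in J\iff xt\in J$, and if both lie in $J$ then $xs=xt$; $\equiv_{\mathsf{RM}}=\bigcap_J\equiv_{\mathsf{RM},J}$ over all regular $J$. A regular $J$ is $\mathsf{RM}$-irreducible if $\bigcap_{J'<J}\equiv_{\mathsf{RM},J'}\not\subseteq\equiv_{\mathsf{RM},J}$ (over regular $J'<J$; the empty intersection is the universal relation). *)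

From mathcomp Require Import all_boot.
Set Implicit Arguments. Unset Strict Implicit. Unset Printing Implicit Defensive.

Section Semigroup.
Variables (T : finType) (mul : T -> T -> T).

(* Multiplication by elements of S^1 = S + {1}; None plays the role of 1. *)
Definition lmul1 (u : option T) (a : T) : T :=
  if u is Some u' then mul u' a else a.
Definition rmul1 (a : T) (v : option T) : T :=
  if v is Some v' then mul a v' else a.

Definition ideal (A : {set T}) : {set T} :=
  [set x | [exists a in A, exists u : option T, exists v : option T,
             x == rmul1 (lmul1 u a) v]].

Definition jeq (x y : T) : bool := ideal [set x] == ideal [set y].
Definition jclass (x : T) : {set T} := [set y | jeq x y].
Definition is_jclass (J : {set T}) : bool := [exists x, J == jclass x].

Definition regular_jclass (J : {set T}) : bool :=
  is_jclass J && [exists e in J, mul e e == e].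

Definition jle (J' J : {set T}) : bool := ideal J' \subset ideal J.
Definition jlt (J' J : {set T}) : bool := jle J' J && (J' != J).

Definition rm_rel (J : {set T}) (s t : T) : bool :=
  [forall x in J, ((mul x s \in J) == (mul x t \in J))
                  && ((mul x s \in J) ==> (mul x s == mul x t))].

Definition rm (s t : T) : bool :=
  [forall J : {set T}, regular_jclass J ==> rm_rel J s t].

Definition rm_irreducible (J : {set T}) : bool :=
  regular_jclass J &&
  [exists s, exists t,
     [forall J' : {set T}, (regular_jclass J' && jlt J' J) ==> rm_rel J' s t]
     && ~~ rm_rel J s t].

End Semigroup.

From mathcomp Require Import all_boot.
Set Implicit Arguments. Unset Strict Implicit. Unset Printing Implicit Defensive.

(* If a regular J-class J is not RM-irreducible, then ==_{RM,J} contains the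
   intersection of the relations ==_{RM,J'} for the regular J' < J, so by
   induction along the J-order every ==_{RM,J} contains the intersection over
   the irreducible classes.
   For minimality, let (s, t) witness the irreducibility of J0 and let
   x s <> x t with x in J0.  Factor x = w y through an idempotent e of J0,
   with w in J0 and y <=_J e.  The pair (y s, y t) is still separated by J0
   (via w); it is related at every J-class below J0 because ==_{RM,J} is
   compatible with left multiplication; and it is trivially related at every
   J-class not below J0, since no z y r can lie in such a class. *)

Section GreenOrder.
Variables (T : finType) (mul : T -> T -> T).
Hypothesis mulA : associative mul.

Definition leJ x y := x \in ideal mul [set y].

Lemma leJP x y : reflect (exists u v, x = rmul1 mul (lmul1 mul u y) v) (leJ x y).
Proof.
rewrite /leJ /ideal inE; apply: (iffP idP).
- case/existsP => a /andP[]; rewrite inE => /eqP -> /existsP[u /existsP[v /eqP ->]].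
  by exists u, v.
- case=> u [v ->]; apply/existsP; exists y; rewrite inE eqxx /=.
  by apply/existsP; exists u; apply/existsP; exists v.
Qed.

Lemma mem_idealP (A : {set T}) x :
  reflect (exists2 a, a \in A & leJ x a) (x \in ideal mul A).
Proof.
rewrite /leJ /ideal inE; apply: (iffP idP).
- case/existsP => a /andP[aA xa]; exists a => //; rewrite inE.
  by apply/existsP; exists a; rewrite inE eqxx.
- case=> a aA; rewrite inE => /existsP[b /andP[]]; rewrite inE => /eqP -> xb.
  by apply/existsP; exists a; rewrite aA.
Qed.

Lemma leJ_refl x : leJ x x.
Proof. by apply/leJP; exists None, None. Qed.

Definition omul (u v : option T) : option T :=
  match u, v with
  | Some a, Some b => Some (mul a b)
  | Some a, None => Some a
  | None, w => w
  end.

Lemma leJ_trans x y z : leJ x y -> leJ y z -> leJ x z.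
Proof.
move=> /leJP[u [v ->]] /leJP[u' [v' ->]]; apply/leJP.
exists (omul u u'), (omul v' v).
by case: u => [a|]; case: u' => [b|]; case: v => [c|]; case: v' => [d|];
  rewrite /= ?mulA.
Qed.

Lemma leJ_mull x y : leJ (mul x y) y.
Proof. by apply/leJP; exists (Some x), None. Qed.

Lemma leJ_mulr x y : leJ (mul x y) x.
Proof. by apply/leJP; exists None, (Some y). Qed.

Lemma sub_ideal1 x y : (ideal mul [set x] \subset ideal mul [set y]) = leJ x y.
Proof.
apply/subsetP/idP => [sub|xy z zx]; first exact/sub/leJ_refl.
exact: leJ_trans zx xy.
Qed.

Lemma in_jclass c z : (z \in jclass mul c) = leJ z c && leJ c z.
Proof. by rewrite inE /jeq eqEsubset !sub_ideal1 andbC. Qed.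

Lemma ideal_jclass c : ideal mul (jclass mul c) = ideal mul [set c].
Proof.
apply/setP=> w; apply/mem_idealP/idP.
- by case=> a; rewrite in_jclass => /andP[ac _] wa; apply: leJ_trans wa ac.
- by move=> wc; exists c; rewrite // in_jclass leJ_refl.
Qed.

Lemma jle_jclass c c' : jle mul (jclass mul c') (jclass mul c) = leJ c' c.
Proof. by rewrite /jle !ideal_jclass sub_ideal1. Qed.

Lemma jclass_between c p q :
  leJ p q -> leJ q c -> p \in jclass mul c -> q \in jclass mul c.
Proof.
move=> pq qc; rewrite !in_jclass qc => /andP[_ cp]; exact: leJ_trans cp pq.
Qed.

Lemma jlt_jclass_card c c' :
  jlt mul (jclass mul c') (jclass mul c) ->
  #|ideal mul (jclass mul c')| < #|ideal mul (jclass mul c)|.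
Proof.
case/andP=> sub neq; apply: proper_card; rewrite properEneq andbC.
apply/andP; split; first exact: sub.
apply: contra neq; rewrite !ideal_jclass => /eqP eq_ideal.
by apply/eqP/setP => z; rewrite !inE /jeq eq_ideal.
Qed.

Lemma regular_jclassP J : regular_jclass mul J -> exists c, J = jclass mul c.
Proof. by case/andP => /existsP[c /eqP ->] _; exists c. Qed.

Lemma idempotent_factor x e : mul e e = e -> leJ x e ->
  exists w y, [/\ mul w y = x, leJ w e & leJ y e].
Proof.
move=> ee /leJP[u [v ->]].
exists (lmul1 mul u e), (rmul1 mul e v); split.
- by case: u => [a|]; case: v => [b|]; rewrite /= ?mulA -?(mulA _ e e) ?ee.
- by apply/leJP; exists u, None.
- by apply/leJP; exists None, v.
Qed.

Lemma rm_rel_mull c s t y :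
  rm_rel mul (jclass mul c) s t ->
  rm_rel mul (jclass mul c) (mul y s) (mul y t).
Proof.
move=> st; apply/forallP => z; apply/implyP => zJ; rewrite !mulA.
case zyJ: (mul z y \in jclass mul c); first exact: (implyP (forallP st _) zyJ).
have zyc : leJ (mul z y) c.
  by apply: leJ_trans (leJ_mulr _ _) _; move: zJ; rewrite in_jclass => /andP[].
have zyr_notin r : mul (mul z y) r \in jclass mul c = false.
  by apply: contraFF zyJ; apply: jclass_between (leJ_mulr _ _) zyc.
by rewrite !zyr_notin.
Qed.

Lemma rm_rel_mul_notin c a s t :
  ~~ leJ c a -> rm_rel mul (jclass mul c) (mul a s) (mul a t).
Proof.
move=> ca; apply/forallP => z; apply/implyP => _.
have zar_notin r : mul z (mul a r) \in jclass mul c = false.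
  apply: contraNF ca; rewrite in_jclass => /andP[_ /leJ_trans]; apply.
  exact: leJ_trans (leJ_mull _ _) (leJ_mulr _ _).
by rewrite !zar_notin.
Qed.

Lemma rm_rel_of_irreducible s t :
  (forall J, rm_irreducible mul J -> rm_rel mul J s t) ->
  forall J, regular_jclass mul J -> rm_rel mul J s t.
Proof.
move=> irr_st J; have [n] := ubnP #|ideal mul J|.
elim: n J => // n IH J /ltnSE cardJ regJ.
case irrJ: (rm_irreducible mul J); first exact: irr_st.
move: irrJ; rewrite /rm_irreducible regJ /= => /existsPn/(_ s)/existsPn/(_ t).
rewrite negb_and negbK => /orP[|//] /forallPn[J'].
rewrite negb_imply => /andP[/andP[regJ' ltJ'J] /negP]; case.
have [[c eqJ] [c' eqJ']] := (regular_jclassP regJ, regular_jclassP regJ').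
apply: IH regJ'; apply: leq_trans cardJ.
by move: ltJ'J; rewrite eqJ eqJ'; apply: jlt_jclass_card.
Qed.

Lemma rm_irreducible_separates J0 : rm_irreducible mul J0 ->
  exists s t, (forall J, regular_jclass mul J -> J != J0 -> rm_rel mul J s t)
              /\ ~~ rm_rel mul J0 s t.
Proof.
case/andP=> regJ0 /existsP[s /existsP[t /andP[/forallP below_st not_st]]].
have /andP[_ /existsP[e /andP[eJ0 /eqP ee]]] := regJ0.
have [c eqJ0] := regular_jclassP regJ0; subst J0.
have /forallPn[x] := not_st; rewrite negb_imply => /andP[xJ0 xst].
have /andP[ec ce] : leJ e c && leJ c e by rewrite -in_jclass.
have /andP[xc _] : leJ x c && leJ c x by rewrite -in_jclass.
have [w [y [wy we ye]]] := idempotent_factor ee (leJ_trans xc ce).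
exists (mul y s), (mul y t); split.
  move=> J regJ neqJ; have [d eqJ] := regular_jclassP regJ; subst J.
  have [dc|dNc] := boolP (leJ d c).
    apply: rm_rel_mull; apply: (implyP (below_st _)).
    by rewrite regJ /jlt neqJ jle_jclass dc.
  apply: rm_rel_mul_notin; apply: contra dNc => dy.
  exact: leJ_trans dy (leJ_trans ye ec).
have wJ0 : w \in jclass mul c.
  by apply: jclass_between xJ0; rewrite ?(leJ_trans we ec) // -wy leJ_mulr.
by apply/forallPn; exists w; rewrite negb_imply wJ0 !mulA wy.
Qed.

End GreenOrder.

Theorem proposition2p3 (T : finType) (mul : T -> T -> T)
  (mulA : associative mul) :
  (forall s t : T,
     rm mul s t <->
     (forall J : {set T}, rm_irreducible mul J -> rm_rel mul J s t))
  /\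
  (forall J0 : {set T}, rm_irreducible mul J0 ->
     exists s t : T,
       (forall J : {set T}, rm_irreducible mul J -> J != J0 -> rm_rel mul J s t)
       /\ ~~ rm_rel mul J0 s t).
Proof.
split=> [s t|J0 /(rm_irreducible_separates mulA)[s [t [sep not_st]]]].
  split=> [/forallP rm_st J /andP[regJ _]|irr_st]; first exact: implyP (rm_st J) regJ.
  by apply/forallP => J; apply/implyP; apply: rm_rel_of_irreducible.
exists s, t; split=> // J /andP[regJ _]; exact: sep.
Qed.
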